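(* Let $k\ge2$ be an integer and $\Delta=2^k$, and consider the instance $\overline{\mathcal I}$ described below. Then for every $i\in[k]$, every agent in group $G_i$ has weighted maximin share exactly $w_i$. Instance $\overline{\mathcal I}$: agents are partitioned into groups $G_1,\dots,G_k$ with $|G_i|=n_i=\Delta^{i-1}$; all agents in $G_i$ have weight $w_i$ and the same cost function $v_i$, where $w_1=1$ and $w_i=2^{i-2}/n_i$ for $i\ge2$. Items are partitioned into $\mathcal M_1,\dots,\mathcal M_k$ with $|\mathcal M_1|=m_1=1$ and $|\mathcal M_i|=m_i=\tfrac32 n_i$ for $i\ge2$; for $i\ge2$, $\mathcal M_i=\mathcal M_i^1\cup\mathcal M_i^2$ with $|\mathcal M_i^1|=n_i/2$, $|\mathcal M_i^2|=n_i$; $T_i\subseteq\mathcal M_i^1$ is any subset with $|T_i|=n_i/2-(m_1+\cdots+m_{i-1})$, $T_i'=\mathcal M_i^1\setminus T_i$, and $B_i=\mathcal M_1\cup\cdots\cup\mathcal M_{i-1}\cup T_i$. Costs: $v_1(e)=1$ for the unique $e\in\mathcal M_1$; for $1\le j<i$ (with $i\ge 2$), $v_j(e)=w_i$ for $e\in\mathcal M_i^1$ and $v_j(e)=w_i/2$ for $e\in\mathcal M_i^2$; for $i\ge2$, $v_i(e)=2w_i$ for $e\in B_i$, $v_i(e)=0$ for $e\in T_i'$, and $v_i(e)=w_i$ for $e\in\mathcal M_i^2$. All cost functions are additive.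
   Context: For a chore-allocation instance with agents $\mathcal N$, items $\mathcal M$, positive weights $w_a$ and additive costs $v_a$, an allocation is an ordered partition of $\mathcal M$ into one (possibly empty) bundle per agent, and the weighted maximin share of agent $a$ is $\mathsf{WMMS}_a=w_a\cdot\min_{\text{allocations }(B_b)_{b\in\mathcal N}}\max_{b\in\mathcal N}\frac{v_a(B_b)}{w_b}$. (Weights need not be normalized.) One checks that $m_1+\cdots+m_{i-1}\le n_i/2$ so $T_i$ is well defined. *)

From HB Require Import structures.
From mathcomp Require Import all_boot all_order all_algebra.
Set Implicit Arguments. Unset Strict Implicit. Unset Printing Implicit Defensive.
Import Order.TTheory GRing.Theory Num.Theory.
Local Open Scope ring_scope.

Section WMMS.
Variables (R : realFieldType) (N M : finType).
Variables (w : N -> R) (v : N -> M -> R).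

Definition bundle_cost (a : N) (f : {ffun M -> N}) (b : N) : R :=
  \sum_(e | f e == b) v a e.

(* max_b v_a(B_b)/w_b; the max over the nonempty set N is written as a fold
   whose initial value is one of the elements (b = a), hence equals the max *)
Definition alloc_val (a : N) (f : {ffun M -> N}) : R :=
  \big[Num.max/ bundle_cost a f a / w a]_(b : N) (bundle_cost a f b / w b).

(* WMMS_a = w_a * min over allocations of alloc_val; again the min is a fold
   whose initial value is attained by some allocation (everything to a) *)
Definition wmms (a : N) : R :=
  w a * \big[Num.min/ alloc_val a [ffun _ => a]]_(f : {ffun M -> N}) alloc_val a f.
End WMMS.

Definition nn (k i : nat) : nat := 2 ^ (k * i.-1).
Definition mm (k i : nat) : nat := if i == 1%N then 1%N else ((nn k i)./2 * 3)%N.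
Definition wt (R : realFieldType) (k i : nat) : R :=
  if i == 1%N then 1 else (2 ^ (i - 2))%:R / (nn k i)%:R.

(* cost to an agent of group i of an item of class ie;
   p = item lies in M_ie^1 (vs M_ie^2); inT = item lies in T_ie *)
Definition cost (R : realFieldType) (k i ie : nat) (p inT : bool) : R :=
  if (i < ie)%N then (if p then wt R k ie else wt R k ie / 2)
  else if i == 1%N then 1
  else if (ie < i)%N then 2 * wt R k i
  else if p then (if inT then 2 * wt R k i else 0) else wt R k i.

From HB Require Import structures.
From mathcomp Require Import all_boot all_order all_algebra.
From mathcomp Require Import zify.
Set Implicit Arguments. Unset Strict Implicit. Unset Printing Implicit Defensive.
Import Order.TTheory GRing.Theory Num.Theory.

(* Fix an agent of group j.  It suffices to find an allocation in which every
   bundle costs her exactly its owner's weight: her total cost is then the total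
   weight, so in any allocation some bundle costs her at least its owner's
   weight, and the allocation found attains ratio 1.
   Such an allocation: half of the agents of each group i > j take one item of
   M_i^1 (cost w_i), the other half two items of M_i^2 (cost w_i / 2 each); each
   agent of group j takes one item of cost w_j (of M_j^2, or M_1 if j = 1); the
   n_j / 2 items of B_j, of cost 2 w_j each, are shared among the groups below
   j, an agent of group i taking w_i / (2 w_j) of them, which is possible because
   the groups below j have total weight 2^(j-2) = n_j w_j; the items of T_j'
   cost nothing and go anywhere. *)

Definition prefix_set (X : finType) (n : nat) (A : {set X}) : {set X} :=
  [set x in take n (enum A)].

Lemma prefix_set_sub (X : finType) n (A : {set X}) : prefix_set n A \subset A.
Proof. by apply/subsetP => x; rewrite inE => /mem_take; rewrite mem_enum. Qed.

Lemma card_prefix_set (X : finType) n (A : {set X}) :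
  #|prefix_set n A| = minn n #|A|.
Proof.
rewrite cardsE (card_uniqP (take_uniq n (enum_uniq (mem A)))).
by rewrite size_take -cardE.
Qed.

Section Distribution.
Variables (X Y : finType) (L : eqType) (y0 : Y).
Variables (lab : X -> option L) (lbY : Y -> L) (cnt : Y -> nat).

(* Items labelled [None] may go to anyone; an item labelled [Some t] must go to
   an agent labelled [t], and agent [y] must receive [cnt y] such items. *)
Lemma distribute_seq (s : seq Y) (A : {set X}) : uniq s ->
  (forall t, \sum_(y <- s | lbY y == t) cnt y = #|[set x in A | lab x == Some t]|) ->
  exists f : X -> Y,
    (forall y, y \in s ->
       #|[set x in A | (f x == y) && (lab x == Some (lbY y))]| = cnt y) /\
    (forall x t, x \in A -> lab x = Some t -> f x \in s /\ lbY (f x) = t).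
Proof.
elim: s A => [|y s IH] A /=.
  move=> _ count; exists (fun=> y0); split=> // x t xA xt.
  have := count t; rewrite big_nil => /esym/eqP; rewrite cards_eq0 => /eqP/setP/(_ x).
  by rewrite !inE xA xt eqxx.
case/andP=> y_s uniq_s count.
have [B BA cardB] : exists2 B : {set X}, B \subset [set x in A | lab x == Some (lbY y)] &
                                #|B| = cnt y.
  exists (prefix_set (cnt y) [set x in A | lab x == Some (lbY y)]).
    exact: prefix_set_sub.
  by rewrite card_prefix_set -count big_cons eqxx; apply/minn_idPl/leq_addr.
have BAx x : x \in B -> x \in A /\ lab x = Some (lbY y).
  by move/(subsetP BA); rewrite inE => /andP[-> /eqP].
have [f [f_count f_lab]] : exists f : X -> Y,
    (forall z, z \in s ->
       #|[set x in A :\: B | (f x == z) && (lab x == Some (lbY z))]| = cnt z) /\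
    (forall x t, x \in A :\: B -> lab x = Some t -> f x \in s /\ lbY (f x) = t).
  apply: IH => // t; move: (count t); rewrite big_cons.
  have -> : [set x in A :\: B | lab x == Some t] =
            [set x in A | lab x == Some t] :\: B by apply/setP => x; rewrite !inE andbA.
  rewrite cardsD; case: eqP => [<-|ne]; last first.
    suff -> : [set x in A | lab x == Some t] :&: B = set0 by rewrite cards0 subn0.
    apply/setP => x; rewrite !inE; case: (boolP (x \in B)) => xB; rewrite ?andbF //.
    by have [_ ->] := BAx x xB; rewrite andbT; apply/negbTE/andP => -[_ /eqP[/ne]].
  by rewrite (setIidPr BA) cardB => <-; rewrite addKn.
exists (fun x => if x \in B then y else f x); split.
  move=> z; rewrite inE => /predU1P[->|z_s].
    rewrite -cardB; apply: eq_card => x; rewrite inE.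
    case: ifP => xB; first by have [-> ->] := BAx x xB; rewrite !eqxx.
    apply/negbTE/andP => -[xA /andP[/eqP fxy /eqP xl]].
    have xAB : x \in A :\: B by rewrite inE xB xA.
    by have [] := f_lab x _ xAB xl; rewrite fxy (negPf y_s).
  rewrite -(f_count z z_s); apply: eq_card => x; rewrite !inE.
  case: ifP => xB; last by [].
  have -> : (y == z) = false by apply: contraNF y_s => /eqP ->.
  by rewrite andbF.
move=> x t xA xt; case: ifP => xB.
  by have [_] := BAx x xB; rewrite xt => -[<-]; rewrite mem_head.
have xAB : x \in A :\: B by rewrite inE xB xA.
by have [fs ft] := f_lab x t xAB xt; rewrite inE fs orbT.
Qed.
End Distribution.

Lemma sum_by_value (X : finType) (g : X -> nat) (F : nat -> nat) j :
  (forall x, 0 < g x) ->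
  \sum_(x | g x < j) F (g x) = \sum_(1 <= i < j) F i * #|[set x | g x == i]|.
Proof.
move=> g_gt0; elim: j => [|j IH]; first by rewrite big_pred0 ?big_geq.
have [->|j_gt0] := posnP j.
  by rewrite big_pred0 ?big_geq // => x; rewrite ltnNge g_gt0.
rewrite big_nat_recr //= -IH (bigID (fun x => g x < j)) /=; congr (_ + _).
  by apply: eq_bigl => x; rewrite andb_idl //; apply: ltnW.
rewrite mulnC -sum_nat_const; apply: eq_big => x; rewrite ?inE ltnS -ltnNge.
  by rewrite ltnS -eqn_leq.
by case/andP=> le_gj le_jg; congr F; apply/eqP; rewrite eqn_leq le_gj.
Qed.

Lemma nn_gt0 k i : 0 < nn k i.
Proof. by rewrite expn_gt0. Qed.

Lemma odd_nn k i : 0 < k -> 1 < i -> ~~ odd (nn k i).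
Proof. by move=> k_gt0 i_gt1; rewrite /nn oddX orbF; nia. Qed.

Lemma nn_ge2 k i : 0 < k -> 1 < i -> 2 <= nn k i.
Proof. by move=> k_gt0 i_gt1; rewrite /nn -{1}(expn1 2) leq_exp2l //; nia. Qed.

Lemma sum_mm_le_half k j : 1 < k -> 1 < j -> \sum_(1 <= i < j) mm k i <= (nn k j)./2.
Proof.
move=> k_gt1; elim: j => // j IH j_gt0.
have [j1|j_gt1] := leqP j 1.
  have -> : j = 1 by lia.
  by rewrite big_nat1 -leq_double even_halfK ?odd_nn ?nn_ge2 //; lia.
rewrite big_nat_recr ?(ltnW j_gt1) //= [mm k j]/mm ifN_eq; last by lia.
have nn_succ : 4 * nn k j <= nn k j.+1.
  by rewrite /nn -(expnD 2 2) leq_exp2l //; nia.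
have := IH j_gt1; have := even_halfK (odd_nn (ltnW k_gt1) j_gt1).
have := even_halfK (odd_nn (ltnW k_gt1) j_gt0).
lia.
Qed.

Local Open Scope ring_scope.

Section WeightedMaximinShare.
Variables (R : realFieldType) (N M : finType) (w : N -> R) (v : N -> M -> R).
Hypothesis w_gt0 : forall b, 0 < w b.

Lemma sum_bundle_cost a (f : {ffun M -> N}) :
  \sum_b bundle_cost v a f b = \sum_e v a e.
Proof.
rewrite /bundle_cost (exchange_big_dep xpredT) //=.
by apply: eq_bigr => e _; rewrite (big_pred1 (f e)) // => b; rewrite eq_sym.
Qed.

Lemma alloc_val_ge1 a (f : {ffun M -> N}) :
  \sum_e v a e = \sum_b w b -> 1 <= alloc_val w v a f.
Proof.
move=> total.
have /existsP[b le_wb] : [exists b, w b <= bundle_cost v a f b].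
  apply: contraT => /existsPn lt_cost.
  suff : \sum_b bundle_cost v a f b < \sum_b w b by rewrite sum_bundle_cost total ltxx.
  apply: ltr_sum; first by apply/hasP; exists a; rewrite ?mem_index_enum.
  by move=> b _; rewrite ltNge lt_cost.
by apply: le_trans (le_bigmax _ _ b); rewrite ler_pdivlMr // mul1r.
Qed.

Lemma alloc_val_proportional a (f : {ffun M -> N}) :
  (forall b, bundle_cost v a f b = w b) -> alloc_val w v a f = 1.
Proof.
move=> cost_f; have wK b : bundle_cost v a f b / w b = 1 by rewrite cost_f divff ?gt_eqF.
apply/eqP; rewrite eq_le; apply/andP; split; first by apply: bigmax_le => [|b _]; rewrite wK.
by apply: le_trans (le_bigmax _ _ a); rewrite wK.
Qed.

Lemma wmms_eq_weight a :
  (exists f : {ffun M -> N}, forall b, bundle_cost v a f b = w b) -> wmms w v a = w a.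
Proof.
move=> [f cost_f]; rewrite /wmms -[RHS]mulr1; congr (_ * _).
have total : \sum_e v a e = \sum_b w b.
  by rewrite -(sum_bundle_cost a f); apply: eq_bigr => b _; apply: cost_f.
apply/eqP; rewrite eq_le; apply/andP; split.
  by rewrite -(alloc_val_proportional cost_f); apply: bigmin_le.
by apply/bigmin_geP; split=> [|g _]; apply: alloc_val_ge1.
Qed.

Variables (a : N) (L : eqType) (lab : M -> option L) (lbY : N -> L) (cnt : N -> nat).
Variable cl : L -> R.

Lemma exists_alloc_of_labelling :
  (forall t, \sum_(b | lbY b == t) cnt b = #|[set e | lab e == Some t]|) ->
  (forall e, v a e = oapp cl 0 (lab e)) ->
  (forall b, (cnt b)%:R * cl (lbY b) = w b) ->
  exists f : {ffun M -> N}, forall b, bundle_cost v a f b = w b.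
Proof.
move=> count v_lab cnt_w.
have [f [f_count f_lab]] : exists f : M -> N,
    (forall b, b \in enum N ->
       #|[set e in setT | (f e == b) && (lab e == Some (lbY b))]| = cnt b) /\
    (forall e t, e \in setT -> lab e = Some t -> f e \in enum N /\ lbY (f e) = t).
  apply: (distribute_seq a) => [|t]; first exact: enum_uniq.
  by rewrite big_enum_cond count; apply: eq_card => e; rewrite !inE.
exists [ffun e => f e] => b.
rewrite /bundle_cost (bigID (fun e => lab e == Some (lbY b))) /=.
rewrite [X in _ + X]big1 ?addr0; last first.
  move=> e; rewrite ffunE v_lab; case E: (lab e) => [t|] //= /andP[/eqP fe].
  by have [_ <-] := f_lab e t (in_setT e) E; rewrite fe eqxx.
rewrite -cnt_w -(f_count b (mem_enum _ _)) -sum1_card natr_sum mulr_suml.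
apply: eq_big => [e|e /andP[_ /eqP le]]; first by rewrite ffunE !inE.
by rewrite v_lab le mul1r.
Qed.
End WeightedMaximinShare.

Lemma wt_gt0 (R : realFieldType) k i : 0 < wt R k i.
Proof. by rewrite /wt; case: ifP => // _; rewrite divr_gt0 ?ltr0n ?expn_gt0 ?nn_gt0. Qed.

Lemma wt_nn (R : realFieldType) k i : (1 < i)%N ->
  wt R k i * (nn k i)%:R = (2 ^ (i - 2))%:R.
Proof.
by move=> i_gt1; rewrite /wt ifN_eq ?divfK ?pnatr_eq0 -?lt0n ?nn_gt0 //; lia.
Qed.

Lemma sum_nn_wt (R : realFieldType) k j : (1 < j)%N ->
  \sum_(1 <= i < j) (nn k i)%:R * wt R k i = (2 ^ (j - 2))%:R :> R.
Proof.
elim: j => // j IH j_gt0; have [j1|j_gt1] := leqP j 1.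
  have -> : j = 1%N by lia.
  by rewrite big_nat1 /nn /wt muln0 mulr1.
rewrite big_nat_recr ?(ltnW j_gt1) //= IH // mulrC wt_nn // -natrD addnn -mul2n -expnS.
by congr (_ ^ _)%:R; lia.
Qed.

(* [heavy_share k j i] is [wt i / (2 * wt j)]: the number of items of cost
   [2 * wt j] that an agent of group [i < j] receives. *)
Definition heavy_share (k j i : nat) : nat := 2 ^ ((k - 1) * (j - i) - (i != 1%N)).

Lemma heavy_share_wt (R : realFieldType) k j i : (1 < k)%N -> (0 < i < j)%N ->
  (heavy_share k j i)%:R * (2 * wt R k j) = wt R k i.
Proof.
move=> k_gt1 /andP[i_gt0 lt_ij]; have nn_neq0 l : (nn k l)%:R != 0 :> R.
  by rewrite pnatr_eq0 -lt0n nn_gt0.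
rewrite /wt ifN_eq; last by lia.
rewrite mulrA mulrA -!natrM /heavy_share; case: eqP => [-> | i_neq1] /=.
  rewrite /nn -mulnA -expnS -expnD.
  have -> : ((k - 1) * (j - 1) - 0 + (j - 2).+1 = k * j.-1)%N by nia.
  exact: divff (nn_neq0 j).
apply/eqP; rewrite eqr_div // -!natrM eqr_nat /nn -expnSr -!expnD.
by rewrite eqn_exp2l //; apply/eqP; nia.
Qed.

(* The roles of items and agents in the allocation built for an agent of group
   [j]: [Single i] and [Pair i] for M_i^1 and M_i^2 (i > j) and the agents of
   group [i] receiving them, [Heavy] for B_j and the agents below [j], [Own] for
   the items of cost [wt j] and the agents of group [j]. *)
Inductive kind := Single of nat | Pair of nat | Heavy | Own.

Definition eq_kind (s t : kind) : bool :=
  match s, t with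
  | Single i, Single i' | Pair i, Pair i' => i == i'
  | Heavy, Heavy | Own, Own => true
  | _, _ => false
  end.

Lemma eq_kindP : Equality.axiom eq_kind.
Proof.
by case=> [i|i||] [i'|i'||] /=; apply: (iffP idP) => // [/eqP -> | [->]].
Qed.

HB.instance Definition _ := hasDecEq.Build kind eq_kindP.

Lemma eq_kindE (s t : kind) : (s == t) = eq_kind s t.
Proof. by []. Qed.

Lemma eq_some_kindE (s t : kind) : (Some s == Some t) = eq_kind s t.
Proof. by []. Qed.

Section Instance.
Variables (R : realFieldType) (k : nat) (N M : finType).
Variables (grp : N -> nat) (cls : M -> nat) (part1 : M -> bool) (T : {set M}).
Hypothesis k_gt1 : (2 <= k)%N.
Hypothesis grp_range : forall b, (1 <= grp b <= k)%N.
Hypothesis card_grp : forall i, (1 <= i <= k)%N -> #|[set b | grp b == i]| = nn k i.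
Hypothesis cls_range : forall e, (1 <= cls e <= k)%N.
Hypothesis card_cls1 : #|[set e | cls e == 1%N]| = 1%N.
Hypothesis card_part1 : forall i, (2 <= i <= k)%N ->
  #|[set e | (cls e == i) && part1 e]| = (nn k i)./2.
Hypothesis card_part2 : forall i, (2 <= i <= k)%N ->
  #|[set e | (cls e == i) && ~~ part1 e]| = nn k i.
Hypothesis T_sub : T \subset [set e | (2 <= cls e)%N && part1 e].
Hypothesis card_T : forall i, (2 <= i <= k)%N ->
  #|[set e in T | cls e == i]| = ((nn k i)./2 - \sum_(1 <= j < i) mm k j)%N.

Definition agents i := [set b | grp b == i].

Definition half_agents i := prefix_set (#|agents i|)./2 (agents i).

Lemma grp_gt0 b : (0 < grp b)%N. Proof. by case/andP: (grp_range b). Qed.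

Lemma cls_gt0 e : (0 < cls e)%N. Proof. by case/andP: (cls_range e). Qed.

Lemma grp_half_agents i b : b \in half_agents i -> grp b = i.
Proof. by move/(subsetP (prefix_set_sub _ _)); rewrite inE => /eqP. Qed.

Lemma card_half_agents i : #|half_agents i| = (#|agents i|)./2.
Proof. by rewrite card_prefix_set; apply/minn_idPl; lia. Qed.

Lemma agents_out i : (k < i)%N -> agents i = set0.
Proof.
move=> lt_ki; apply/setP => b; rewrite !inE.
by apply: contraTF (grp_range b) => /eqP ->; lia.
Qed.

Lemma items_out i (P : pred M) : (k < i)%N -> #|[set e | (cls e == i) && P e]| = 0%N.
Proof.
move=> lt_ki; apply: eq_card0 => e; rewrite !inE.
by apply: contraTF (cls_range e) => /andP[/eqP -> _]; lia.
Qed.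

Lemma even_card_agents i : (1 < i)%N -> ~~ odd #|agents i|.
Proof.
move=> i_gt1; have [le_ik|lt_ki] := leqP i k; last by rewrite agents_out ?cards0.
by rewrite card_grp ?odd_nn //; lia.
Qed.

Lemma card_items1 i : (1 < i)%N ->
  #|[set e | (cls e == i) && part1 e]| = (#|agents i|)./2.
Proof.
move=> i_gt1; have [le_ik|lt_ki] := leqP i k; last by rewrite agents_out ?cards0 ?items_out.
by rewrite card_part1 ?card_grp //; lia.
Qed.

Lemma card_items2 i : (1 < i)%N ->
  #|[set e | (cls e == i) && ~~ part1 e]| = #|agents i|.
Proof.
move=> i_gt1; have [le_ik|lt_ki] := leqP i k; last by rewrite agents_out ?cards0 ?items_out.
by rewrite card_part2 ?card_grp //; lia.
Qed.

Lemma card_cls i : (1 <= i <= k)%N -> #|[set e | cls e == i]| = mm k i.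
Proof.
move=> i_range; rewrite /mm; case: eqP => [-> //|i_neq1].
have i_gt1 : (1 < i)%N by lia.
rewrite -(cardsID [set e | part1 e]).
have -> : [set e | cls e == i] :&: [set e | part1 e] = [set e | (cls e == i) && part1 e].
  by apply/setP => e; rewrite !inE.
have -> : [set e | cls e == i] :\: [set e | part1 e] = [set e | (cls e == i) && ~~ part1 e].
  by apply/setP => e; rewrite !inE andbC.
rewrite card_part1 ?card_part2; try lia.
by have := even_halfK (odd_nn (ltnW k_gt1) i_gt1); lia.
Qed.

Lemma card_cls_lt j : (j <= k.+1)%N ->
  #|[set e | (cls e < j)%N]| = (\sum_(1 <= i < j) mm k i)%N.
Proof.
move=> le_jk; rewrite -sum1_card (eq_bigl (fun e => cls e < j)%N) => [|e]; last first.
  by rewrite inE.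
rewrite (sum_by_value (fun=> 1%N) _ cls_gt0); apply: eq_big_nat => i i_range.
by rewrite mul1n card_cls //; lia.
Qed.

Lemma sum_heavy_share j : (1 < j <= k)%N ->
  (\sum_(b | grp b < j) heavy_share k j (grp b))%N = (nn k j)./2.
Proof.
move=> /andP[j_gt1 le_jk].
have wj_neq0 : 2 * wt R k j != 0 by rewrite mulf_neq0 ?gt_eqF ?wt_gt0.
apply/eqP; rewrite -(eqr_nat R) -(inj_eq (mulIf wj_neq0)); apply/eqP.
rewrite (sum_by_value _ _ grp_gt0) natr_sum mulr_suml.
rewrite (eq_big_nat _ _ (F2 := fun i => (nn k i)%:R * wt R k i)) ?sum_nn_wt //.
  by rewrite mulrA -natrM muln2 (even_halfK (odd_nn (ltnW k_gt1) j_gt1)) mulrC wt_nn.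
move=> i i_range.
by rewrite natrM mulrAC heavy_share_wt ?card_grp ?[_ * wt R k i]mulrC //; lia.
Qed.

Section Group.
Variable j : nat.
Hypothesis j_range : (1 <= j <= k)%N.

Definition item_kind e : option kind :=
  if (j < cls e)%N then Some (if part1 e then Single (cls e) else Pair (cls e))
  else if j == 1%N then Some Own
  else if (cls e < j)%N then Some Heavy
  else if part1 e then (if e \in T then Some Heavy else None)
  else Some Own.

Definition agent_kind b : kind :=
  if (j < grp b)%N then (if b \in half_agents (grp b) then Single (grp b) else Pair (grp b))
  else if (grp b < j)%N then Heavy else Own.

Definition share b : nat :=
  if (j < grp b)%N then (if b \in half_agents (grp b) then 1 else 2)
  else if (grp b < j)%N then heavy_share k j (grp b) else 1.

Definition kind_cost t : R :=
  match t with
  | Single i => wt R k i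
  | Pair i => wt R k i / 2
  | Heavy => 2 * wt R k j
  | Own => wt R k j
  end.

Lemma cost_item_kind e :
  cost R k j (cls e) (part1 e) (e \in T) = oapp kind_cost 0 (item_kind e).
Proof.
rewrite /cost /item_kind; case: ltnP => _; first by case: (part1 e).
case: (j =P 1%N) => [j1|_]; first by rewrite /= j1.
case: ltnP => // _.
by case: (part1 e); case: (e \in T).
Qed.

Lemma share_kind_cost b : (share b)%:R * kind_cost (agent_kind b) = wt R k (grp b).
Proof.
rewrite /share /agent_kind; case: ltnP => [_|le_gj].
  by case: ifP => _ /=; rewrite ?mul1r // mulrC -mulrA mulVf ?mulr1 ?pnatr_eq0.
case: ltnP => [lt_gj|le_jg] /=; first by rewrite heavy_share_wt ?grp_gt0.
have -> : grp b = j by apply/eqP; rewrite eqn_leq le_gj le_jg.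
by rewrite mulr1n mul1r.
Qed.

Lemma agent_kind_single b i :
  (agent_kind b == Single i) = (j < i)%N && (b \in half_agents i).
Proof.
rewrite /agent_kind eq_kindE; have [b_half|b_half] := boolP (b \in half_agents i).
  rewrite (grp_half_agents b_half) b_half andbT.
  by case: ltnP => _ /=; [exact: eqxx | case: ifP].
rewrite andbF; case: ltnP => _ /=; last by case: ifP.
case: ifP => //= b_half'; apply: contraNF b_half => /eqP <-; exact: b_half'.
Qed.

Lemma agent_kind_pair b i :
  (agent_kind b == Pair i) = (j < i)%N && (b \in agents i :\: half_agents i).
Proof.
rewrite /agent_kind eq_kindE in_setD [b \in agents _]inE.
case: ltnP => [lt_jg|le_gj] /=; last first.
  by case: ifP => _; case: (grp b =P i) => [<-|]; rewrite ?andbF // ltnNge le_gj.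
case: ifP => b_half /=; case: (grp b =P i) => [<-|]; rewrite ?andbF //.
  by rewrite b_half andbF.
by rewrite lt_jg b_half.
Qed.

Lemma agent_kind_heavy b : (agent_kind b == Heavy) = (grp b < j)%N.
Proof.
rewrite /agent_kind eq_kindE; case: ltnP => [lt_jg|_] /=; last by case: ifP.
by case: ifP => _; apply/esym/negbTE; rewrite -leqNgt ltnW.
Qed.

Lemma agent_kind_own b : (agent_kind b == Own) = (grp b == j).
Proof.
rewrite /agent_kind eq_kindE eqn_leq; case: ltnP => [lt_jg|le_gj] /=.
  by case: ifP.
by case: ltnP.
Qed.

Lemma item_kind_single e i :
  (item_kind e == Some (Single i)) = (j < i)%N && ((cls e == i) && part1 e).
Proof.
rewrite /item_kind; case: ltnP => [lt_jc|le_cj].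
  case: (part1 e); rewrite eq_some_kindE /= ?andbT ?andbF //.
  by case: eqP => [<-|]; rewrite ?lt_jc ?andbF.
suff -> : (j < i)%N && ((cls e == i) && part1 e) = false by do ![case: ifP => //].
by apply: contraTF le_cj => /and3P[lt_ji /eqP -> _]; rewrite -ltnNge.
Qed.

Lemma item_kind_pair e i :
  (item_kind e == Some (Pair i)) = (j < i)%N && ((cls e == i) && ~~ part1 e).
Proof.
rewrite /item_kind; case: ltnP => [lt_jc|le_cj].
  case: (part1 e); rewrite eq_some_kindE /= ?andbT ?andbF //.
  by case: eqP => [<-|]; rewrite ?lt_jc ?andbF.
suff -> : (j < i)%N && ((cls e == i) && ~~ part1 e) = false by do ![case: ifP => //].
by apply: contraTF le_cj => /and3P[lt_ji /eqP -> _]; rewrite -ltnNge.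
Qed.

Lemma item_kind_heavy e :
  (item_kind e == Some Heavy) = (1 < j)%N && ((cls e < j)%N || (e \in T) && (cls e == j)).
Proof.
rewrite /item_kind; case: ltnP => [lt_jc|le_cj].
  rewrite [(cls e < j)%N]ltnNge (ltnW lt_jc) (gtn_eqF lt_jc) /=.
  by case: (part1 e); rewrite !andbF.
case: (j =P 1%N) => [-> //|j_neq1]; have -> /= : (1 < j)%N by lia.
case: ltnP => [//|le_jc]; rewrite eqn_leq le_cj le_jc andbT /=.
case: (boolP (e \in T)) => [e_T|_]; last by case: (part1 e).
by have := subsetP T_sub e e_T; rewrite inE => /andP[_ ->].
Qed.

Lemma item_kind_own e :
  (item_kind e == Some Own) = (cls e == j) && ((j == 1%N) || ~~ part1 e).
Proof.
rewrite /item_kind; case: ltnP => [lt_jc|le_cj].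
  by rewrite (gtn_eqF lt_jc); case: (part1 e).
case: (j =P 1%N) => [j1|_].
  by rewrite j1 eqn_leq -j1 le_cj j1 cls_gt0.
case: ltnP => [lt_cj|le_jc]; first by rewrite ltn_eqF.
rewrite eqn_leq le_cj le_jc /=; case: (part1 e) => //=; by case: (e \in T).
Qed.

Lemma count_single i :
  (\sum_(b | agent_kind b == Single i) share b)%N = #|[set e | item_kind e == Some (Single i)]|.
Proof.
rewrite (eq_bigl _ _ (agent_kind_single^~ i)).
rewrite (eq_card (B := [pred e | (j < i)%N && ((cls e == i) && part1 e)])) => [|e];
  last by rewrite !inE item_kind_single.
have [lt_ji|le_ij] := ltnP j i; last first.
  by rewrite big_pred0 => [|b]; rewrite ?eq_card0 // => e; rewrite inE /= ltnNge le_ij.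
rewrite (eq_bigr (fun=> 1%N)) => [|b /= b_half]; last first.
  by rewrite /share (grp_half_agents b_half) lt_ji b_half.
rewrite sum1_card card_half_agents -card_items1; last by lia.
by apply: eq_card => e; rewrite !inE.
Qed.

Lemma count_pair i :
  (\sum_(b | agent_kind b == Pair i) share b)%N = #|[set e | item_kind e == Some (Pair i)]|.
Proof.
rewrite (eq_bigl _ _ (agent_kind_pair^~ i)).
rewrite (eq_card (B := [pred e | (j < i)%N && ((cls e == i) && ~~ part1 e)])) => [|e];
  last by rewrite !inE item_kind_pair.
have [lt_ji|le_ij] := ltnP j i; last first.
  by rewrite big_pred0 => [|b]; rewrite ?eq_card0 // => e; rewrite inE /= ltnNge le_ij.
rewrite (eq_bigr (fun=> 2%N)) => [|b /=]; last first.
  rewrite in_setD [b \in agents _]inE => /andP[b_half /eqP gb].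
  by rewrite /share gb lt_ji (negPf b_half).
have i_gt1 : (1 < i)%N by lia.
transitivity #|agents i|.
  rewrite sum_nat_const cardsD (setIidPr (prefix_set_sub _ _)) card_half_agents.
  by have := even_halfK (even_card_agents i_gt1); lia.
by rewrite -card_items2 //; apply: eq_card => e; rewrite !inE.
Qed.

Lemma count_own :
  (\sum_(b | agent_kind b == Own) share b)%N = #|[set e | item_kind e == Some Own]|.
Proof.
rewrite (eq_bigl _ _ agent_kind_own) (eq_bigr (fun=> 1%N)) => [|b /eqP gb]; last first.
  by rewrite /share gb ltnn.
rewrite sum1_card; transitivity #|agents j|; first by apply: eq_card => b; rewrite inE.
case: (j =P 1%N) => [j1|j_neq1].
  symmetry; transitivity #|[set e | cls e == 1%N]|.
    by apply: eq_card => e; rewrite !inE item_kind_own j1 eqxx andbT.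
  rewrite card_cls1 card_grp j1; last by lia.
  by rewrite /nn mulnC.
rewrite -card_items2; last by lia.
by apply: eq_card => e; rewrite !inE item_kind_own; move/eqP/negPf: j_neq1 => ->.
Qed.

Lemma count_heavy :
  (\sum_(b | agent_kind b == Heavy) share b)%N = #|[set e | item_kind e == Some Heavy]|.
Proof.
rewrite (eq_bigl _ _ agent_kind_heavy).
rewrite (eq_bigr (heavy_share k j \o grp)) => [|b lt_gj]; last first.
  by rewrite /share ltnNge (ltnW lt_gj) lt_gj.
case: (j =P 1%N) => [j1|j_neq1].
  rewrite big_pred0 => [|b]; last by rewrite j1 ltnNge grp_gt0.
  by apply/esym/eq_card0 => e; rewrite !inE item_kind_heavy j1.
have j_gt1 : (1 < j <= k)%N by lia.
rewrite sum_heavy_share //.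
have -> : [set e | item_kind e == Some Heavy] =
          [set e | (cls e < j)%N] :|: [set e in T | cls e == j].
  by apply/setP => e; rewrite !inE item_kind_heavy (_ : (1 < j)%N) //; lia.
rewrite cardsU (_ : _ :&: _ = set0) ?cards0 ?subn0; last first.
  by apply/setP => e; rewrite !inE; case: ltnP => //= lt_cj; rewrite ltn_eqF ?andbF.
by rewrite card_cls_lt ?card_T ?subnKC ?sum_mm_le_half //; lia.
Qed.

Lemma count_kind t :
  (\sum_(b | agent_kind b == t) share b)%N = #|[set e | item_kind e == Some t]|.
Proof.
case: t => [i|i||]; [exact: count_single | exact: count_pair | exact: count_heavy |].
exact: count_own.
Qed.

End Group.

Lemma exists_weight_alloc a : exists f : {ffun M -> N}, forall b,
  bundle_cost (fun b e => cost R k (grp b) (cls e) (part1 e) (e \in T)) a f b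
  = wt R k (grp b).
Proof.
apply: (exists_alloc_of_labelling (lab := item_kind (grp a)) (lbY := agent_kind (grp a))
          (cnt := share (grp a)) (cl := kind_cost (grp a))) => [t|e|b].
- exact: count_kind.
- exact: cost_item_kind.
- exact: share_kind_cost.
Qed.
End Instance.

Theorem mainTheorem10 (R : realFieldType) (k : nat) (N M : finType)
    (grp : N -> nat) (cls : M -> nat) (part1 : M -> bool) (T : {set M}) :
  (2 <= k)%N ->
  (forall a, (1 <= grp a <= k)%N) ->
  (forall i, (1 <= i <= k)%N -> #|[set a | grp a == i]| = nn k i) ->
  (forall e, (1 <= cls e <= k)%N) ->
  #|[set e | cls e == 1%N]| = 1%N ->
  (forall i, (2 <= i <= k)%N ->
     #|[set e | (cls e == i) && part1 e]| = (nn k i)./2) ->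
  (forall i, (2 <= i <= k)%N ->
     #|[set e | (cls e == i) && ~~ part1 e]| = nn k i) ->
  T \subset [set e | (2 <= cls e)%N && part1 e] ->
  (forall i, (2 <= i <= k)%N ->
     #|[set e in T | cls e == i]| = ((nn k i)./2 - \sum_(1 <= j < i) mm k j)%N) ->
  forall a : N,
    wmms (fun b => wt R k (grp b))
         (fun b e => cost R k (grp b) (cls e) (part1 e) (e \in T)) a
    = wt R k (grp a).
Proof.
move=> k_gt1 grp_range card_grp cls_range card_cls1 card_part1 card_part2 T_sub card_T a.
apply: wmms_eq_weight => [b|]; first exact: wt_gt0.
exact: exists_weight_alloc.
Qed.
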